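(* Let $f\colon X\to Y$ be a perfect map between metrizable spaces, $d$ a compatible metric on $X$, $(M,\varrho)$ a complete metric space, $m,n\ge1$, $g_0\in C(X,M)$ and $\varepsilon\colon X\to(0,1/64]$ continuous. Equip $C(X,M)$ with the compact-open topology and define $\Phi_\varepsilon(y)=\mathcal{K}(m,n,y)\cap B_\varrho(g_0,\varepsilon)$ for $y\in Y$. If $y_0\in Y$ and $K\subset\Phi_\varepsilon(y_0)$ is compact, then there is a neighborhood $V(y_0)$ of $y_0$ in $Y$ such that $K\subset\Phi_\varepsilon(y)$ for every $y\in V(y_0)$.
   Context: $B_\varrho(g_0,\varepsilon)=\{g\in C(X,M):\varrho(g(x),g_0(x))<\varepsilon(x)\ \forall x\in X\}$. For $A\subset X$, $B(A,\delta)=\{x:d(x,A)<\delta\}$. $C(x,g|f^{-1}(y))$ is the component of $g^{-1}(g(x))\cap f^{-1}(y)$ containing $x$. $\mathcal{K}(m,n,y)$ is the set of $g\in C(X,M)$ such that for every subcontinuum $L\subset f^{-1}(y)$ with $\operatorname{diam}g(L)\ge1/n$ there is $x\in L$ with $C(x,g|f^{-1}(y))\subset B(L,1/m)$. *)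

From Stdlib Require Import Reals List.
Open Scope R_scope.

Section Metric.
Context {T : Type}.

Definition is_metric (d : T -> T -> R) : Prop :=
  (forall x y, 0 <= d x y) /\ (forall x y, d x y = 0 <-> x = y) /\
  (forall x y, d x y = d y x) /\ (forall x y z, d x z <= d x y + d y z).

Definition complete_metric (d : T -> T -> R) : Prop :=
  forall u : nat -> T,
    (forall e, 0 < e -> exists N, forall p q, (N <= p)%nat -> (N <= q)%nat -> d (u p) (u q) < e) ->
    exists l, forall e, 0 < e -> exists N, forall p, (N <= p)%nat -> d (u p) l < e.

Definition open_in (d : T -> T -> R) (U : T -> Prop) : Prop :=
  forall x, U x -> exists r, 0 < r /\ forall z, d x z < r -> U z.

Definition closed_in (d : T -> T -> R) (F : T -> Prop) : Prop :=
  open_in d (fun x => ~ F x).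

Definition compact_in (d : T -> T -> R) (C : T -> Prop) : Prop :=
  forall (I : Type) (U : I -> T -> Prop), (forall i, open_in d (U i)) ->
    (forall x, C x -> exists i, U i x) ->
    exists l : list I, forall x, C x -> exists i, In i l /\ U i x.

Definition connected_in (d : T -> T -> R) (S : T -> Prop) : Prop :=
  forall U V, open_in d U -> open_in d V ->
    (forall x, S x -> U x \/ V x) -> (forall x, ~ (S x /\ U x /\ V x)) ->
    (forall x, ~ (S x /\ U x)) \/ (forall x, ~ (S x /\ V x)).

Definition continuum_in (d : T -> T -> R) (S : T -> Prop) : Prop :=
  (exists x, S x) /\ compact_in d S /\ connected_in d S.

Definition component_in (d : T -> T -> R) (S : T -> Prop) (x z : T) : Prop :=
  exists A, (forall w, A w -> S w) /\ connected_in d A /\ A x /\ A z.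

Definition nbhd_set (d : T -> T -> R) (A : T -> Prop) (del : R) (x : T) : Prop :=
  exists a, A a /\ d x a < del.

End Metric.

Definition continuous_map {A B : Type} (dA : A -> A -> R) (dB : B -> B -> R)
  (h : A -> B) : Prop :=
  forall x e, 0 < e -> exists del, 0 < del /\ forall z, dA x z < del -> dB (h x) (h z) < e.

Definition perfect_map {X Y : Type} (dX : X -> X -> R) (dY : Y -> Y -> R)
  (f : X -> Y) : Prop :=
  continuous_map dX dY f /\
  (forall F, closed_in dX F -> closed_in dY (fun y => exists x, F x /\ f x = y)) /\
  (forall y, compact_in dX (fun x => f x = y)).

(* diam g(L) >= r, i.e. sup { rho(g a, g b) : a, b in L } >= r *)
Definition diam_ge {X M : Type} (rho : M -> M -> R) (g : X -> M) (L : X -> Prop) (r : R) : Prop :=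
  forall r', r' < r -> exists a b, L a /\ L b /\ r' < rho (g a) (g b).

(* C(x, g|f^{-1}(y)) : component of g^{-1}(g(x)) ∩ f^{-1}(y) containing x *)
Definition Ccomp {X Y M : Type} (d : X -> X -> R) (f : X -> Y) (g : X -> M)
  (y : Y) (x : X) : X -> Prop :=
  component_in d (fun z => g z = g x /\ f z = y) x.

Definition Kset {X Y M : Type} (d : X -> X -> R) (rho : M -> M -> R) (f : X -> Y)
  (m n : nat) (y : Y) (g : X -> M) : Prop :=
  continuous_map d rho g /\
  forall L, continuum_in d L -> (forall x, L x -> f x = y) ->
    diam_ge rho g L (1 / INR n) ->
    exists x, L x /\ forall z, Ccomp d f g y x z -> nbhd_set d L (1 / INR m) z.

Definition Bset {X M : Type} (d : X -> X -> R) (rho : M -> M -> R) (g0 : X -> M)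
  (eps : X -> R) (g : X -> M) : Prop :=
  continuous_map d rho g /\ forall x, rho (g x) (g0 x) < eps x.

Definition Phi {X Y M : Type} (d : X -> X -> R) (rho : M -> M -> R) (f : X -> Y)
  (m n : nat) (g0 : X -> M) (eps : X -> R) (y : Y) (g : X -> M) : Prop :=
  Kset d rho f m n y g /\ Bset d rho g0 eps g.

(* Open sets of C(X,M) in the compact-open topology: generated by the subbasic
   sets [C,U] = { g : g(C) ⊆ U }, C ⊆ X compact, U ⊆ M open. *)
Definition CO_open {X M : Type} (d : X -> X -> R) (rho : M -> M -> R)
  (W : (X -> M) -> Prop) : Prop :=
  forall g, continuous_map d rho g -> W g ->
    exists l : list ((X -> Prop) * (M -> Prop)),
      (forall p, In p l -> compact_in d (fst p) /\ open_in rho (snd p) /\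
                           forall x, fst p x -> snd p (g x)) /\
      forall h, continuous_map d rho h ->
        (forall p, In p l -> forall x, fst p x -> snd p (h x)) -> W h.

Definition CO_compact {X M : Type} (d : X -> X -> R) (rho : M -> M -> R)
  (K : (X -> M) -> Prop) : Prop :=
  (forall g, K g -> continuous_map d rho g) /\
  forall (I : Type) (W : I -> (X -> M) -> Prop), (forall i, CO_open d rho (W i)) ->
    (forall g, K g -> exists i, W i g) ->
    exists l : list I, forall g, K g -> exists i, In i l /\ W i g.

From Stdlib Require Import Reals List ZArith Lra Lia Classical IndefiniteDescription.
Open Scope R_scope.

(** Suppose no neighbourhood of [y0] works: then there are [y k -> y0] and
  [G k] in [K] outside K(m,n,y k), i.e. with "bad continua" [L k] in the
  fibres over [y k] (B_rho(g0,eps) does not depend on [y]).  The fibres over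
  [y0] and all [y k] form a compact set [Z] ([f] is perfect); along a
  subsequence, [G k] converges uniformly on [Z] to some [g] in [K] (compact-
  open compactness) and the [L k] converge in Kuratowski's sense.  Their
  limit [L] is a continuum over [y0] with diam g(L) >= 1/n, so [g] in
  K(m,n,y0) gives [x] in [L] whose component C(x, g | f^-1(y0)) stays in
  B(L,1/m).  But the upper limit of the components C(x_k, G_k | f^-1(y_k)),
  x_k in L_k tending to [x], lies in that component, and contains a cluster
  point of points escaping B(L_k,1/m): a contradiction. *)

Definition inv_succ (j : nat) : R := / INR (S j).

Lemma inv_succ_pos j : 0 < inv_succ j.
Proof. unfold inv_succ. apply Rinv_0_lt_compat, lt_0_INR; lia. Qed.

Lemma inv_succ_antitone j k : (j <= k)%nat -> inv_succ k <= inv_succ j.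
Proof.
  intros H. unfold inv_succ. apply Rinv_le_contravar.
  - apply lt_0_INR; lia.
  - apply le_INR; lia.
Qed.

Lemma inv_succ_small e : 0 < e -> exists j, inv_succ j < e.
Proof.
  intros He. destruct (archimed (/ e)) as [Hup _].
  assert (Hnonneg : (0 <= up (/ e))%Z).
  { apply le_IZR. pose proof (Rinv_0_lt_compat e He). lra. }
  exists (Z.to_nat (up (/ e))). unfold inv_succ.
  rewrite S_INR, INR_IZR_INZ, Z2Nat.id by exact Hnonneg.
  replace e with (/ / e) at 2 by (field; lra).
  apply Rinv_lt_contravar.
  - pose proof (Rinv_0_lt_compat e He). apply Rmult_lt_0_compat; lra.
  - lra.
Qed.

(** A subsequence is represented by an infinite set [Q] of indices. *)
Definition unbounded (Q : nat -> Prop) : Prop :=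
  forall N, exists k, (N <= k)%nat /\ Q k.

Definition eventually_in (Q P : nat -> Prop) : Prop :=
  exists N, forall k, (N <= k)%nat -> Q k -> P k.

Definition frequently_in (Q P : nat -> Prop) : Prop :=
  forall N, exists k, (N <= k)%nat /\ Q k /\ P k.

Lemma eventually_and Q P1 P2 :
  eventually_in Q P1 -> eventually_in Q P2 -> eventually_in Q (fun k => P1 k /\ P2 k).
Proof.
  intros [N1 H1] [N2 H2]. exists (max N1 N2). intros k Hk Qk.
  split; [apply H1 | apply H2]; auto; lia.
Qed.

Lemma eventually_ge Q N : eventually_in Q (fun k => (N <= k)%nat).
Proof. exists N. auto. Qed.

Lemma eventually_mono Q P P' :
  (forall k, Q k -> P k -> P' k) -> eventually_in Q P -> eventually_in Q P'.
Proof. intros H [N HN]. exists N. auto. Qed.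

Lemma frequently_mono Q P P' :
  (forall k, Q k -> P k -> P' k) -> frequently_in Q P -> frequently_in Q P'.
Proof. intros H HF N. destruct (HF N) as [k [? [? ?]]]. exists k. auto. Qed.

Lemma eventually_sub Q Q' P :
  (forall k, Q' k -> Q k) -> eventually_in Q P -> eventually_in Q' P.
Proof. intros H [N HN]. exists N. auto. Qed.

Lemma frequently_sub Q Q' P :
  (forall k, Q' k -> Q k) -> frequently_in Q' P -> frequently_in Q P.
Proof. intros H HF N. destruct (HF N) as [k [? [? ?]]]. exists k. auto. Qed.

Lemma eventually_frequently Q P :
  unbounded Q -> eventually_in Q P -> frequently_in Q P.
Proof.
  intros HQ [N1 H1] N. destruct (HQ (max N N1)) as [k [Hk Qk]].
  exists k. repeat split; auto; [lia | apply H1; auto; lia].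
Qed.

Lemma frequently_eventually Q P P' :
  frequently_in Q P -> eventually_in Q P' -> frequently_in Q (fun k => P k /\ P' k).
Proof.
  intros HF [N1 H1] N. destruct (HF (max N N1)) as [k [Hk [Qk Pk]]].
  exists k. repeat split; auto; [lia | apply H1; auto; lia].
Qed.

Lemma frequently_unbounded Q P : frequently_in Q P -> unbounded (fun k => Q k /\ P k).
Proof. intros H N. destruct (H N) as [k [? [? ?]]]. exists k. auto. Qed.

Lemma list_bound {A : Type} (F : A -> nat) (l : list A) :
  exists N, forall c, In c l -> (F c <= N)%nat.
Proof.
  induction l as [|a l [N IH]].
  - exists 0%nat. intros c [].
  - exists (max (F a) N). intros c [<- | Hc]; [lia | specialize (IH c Hc); lia].
Qed.

Lemma diagonal_subsequence (P : nat -> Prop) (R : nat -> nat -> Prop) :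
  (forall j, frequently_in P (R j)) -> (forall j k, R (S j) k -> R j k) ->
  exists Q, (forall k, Q k -> P k) /\ unbounded Q /\ forall j, eventually_in Q (R j).
Proof.
  intros HF Hdecr.
  assert (Hpick : forall p : nat * nat,
             exists k, (snd p <= k)%nat /\ P k /\ R (fst p) k).
  { intros [j N]. apply HF. }
  destruct (functional_choice _ Hpick) as [c Hc].
  (* phi i is an index beyond phi (i-1) satisfying P and R i *)
  pose (phi := fix F (i : nat) : nat :=
          match i with O => c (O, O) | S i' => c (S i', S (F i')) end).
  assert (Hphi : forall i, P (phi i) /\ R i (phi i)).
  { intros [|i]; simpl.
    - destruct (Hc (O, O)) as [_ HR]; exact HR.
    - destruct (Hc (S i, S (phi i))) as [_ HR]; exact HR. }
  assert (Hstep : forall i, (S (phi i) <= phi (S i))%nat).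
  { intros i. simpl. apply (Hc (S i, S (phi i))). }
  assert (Hincr : forall i i', (i < i')%nat -> (phi i < phi i')%nat).
  { intros i i' H. induction H; [apply Hstep | specialize (Hstep m); lia]. }
  assert (Hdecr' : forall j i x, (j <= i)%nat -> R i x -> R j x).
  { intros j i x H. induction H; auto. }
  exists (fun k => exists i, phi i = k). repeat split.
  - intros k [i <-]. apply Hphi.
  - intros N. exists (phi N). split; [|eauto].
    induction N; [lia | specialize (Hstep N); lia].
  - intros j. exists (phi j). intros k Hk [i <-].
    apply (Hdecr' j i); [|apply Hphi].
    destruct (le_lt_dec j i) as [? | Hlt]; [auto | specialize (Hincr _ _ Hlt); lia].
Qed.

Section MetricFacts.
Context {X : Type} (d : X -> X -> R) (Hd : is_metric d).

Lemma metric_refl x : d x x = 0.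
Proof. apply Hd. reflexivity. Qed.

Lemma metric_sym x y : d x y = d y x.
Proof. apply Hd. Qed.

Lemma metric_triangle x y z : d x z <= d x y + d y z.
Proof. apply Hd. Qed.

Lemma metric_eq_of_small x y : (forall e, 0 < e -> d x y < e) -> x = y.
Proof.
  intros Hsmall. apply Hd. destruct Hd as [Hnn _].
  destruct (Rle_lt_or_eq_dec 0 (d x y) (Hnn x y)) as [Hpos | Hz]; [|auto].
  specialize (Hsmall _ Hpos). lra.
Qed.

Lemma ball_open c r : open_in d (fun z => d c z < r).
Proof.
  intros z Hz. exists (r - d c z). split; [lra|].
  intros w Hw. pose proof (metric_triangle c z w). lra.
Qed.

Lemma closed_ball_closed c r : closed_in d (fun z => d c z <= r).
Proof.
  intros z Hz. apply Rnot_le_lt in Hz. exists (d c z - r). split; [lra|].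
  intros w Hw Hcw. pose proof (metric_triangle c w z).
  rewrite (metric_sym w z) in H. lra.
Qed.

Lemma compact_ext C C' :
  (forall z, C z <-> C' z) -> compact_in d C -> compact_in d C'.
Proof.
  intros He HC I U HU Hcov. destruct (HC I U HU) as [l Hl].
  - intros x Cx. apply Hcov, He, Cx.
  - exists l. intros x Cx. apply Hl, He, Cx.
Qed.

Lemma compact_closed_inter C F :
  compact_in d C -> closed_in d F -> compact_in d (fun z => C z /\ F z).
Proof.
  intros HC HF I U HU Hcov.
  set (U' := fun o : option I =>
               match o with Some i => U i | None => fun z => ~ F z end).
  destruct (HC (option I) U') as [l' Hl'].
  - intros [i|]; simpl; auto.
  - intros x Cx. destruct (classic (F x)) as [Fx | nFx].
    + destruct (Hcov x (conj Cx Fx)) as [i Hi]. exists (Some i). exact Hi.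
    + exists None. exact nFx.
  - exists (flat_map (fun o => match o with Some i => i :: nil | None => nil end) l').
    intros x [Cx Fx]. destruct (Hl' x Cx) as [[i|] [Hin Hx]].
    + exists i. split; auto. apply in_flat_map. exists (Some i). simpl; auto.
    + contradiction.
Qed.

Lemma compact_ball_piece Z x r :
  compact_in d Z -> compact_in d (fun z => Z x /\ Z z /\ d x z <= r).
Proof.
  intros HZ. apply (compact_ext (fun z => Z z /\ (Z x /\ d x z <= r)));
    [intros z; tauto|].
  apply compact_closed_inter; [exact HZ|].
  destruct (classic (Z x)) as [Zx | nZ].
  - intros z Hz. destruct (closed_ball_closed x r z) as [t [Ht Hb]]; [tauto|].
    exists t. split; [auto|]. intros w Hw [_ Hw']. apply (Hb w Hw Hw').
  - intros z _. exists 1. split; [lra|]. intros w _ [? _]. auto.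
Qed.

Lemma compact_union C C' :
  compact_in d C -> compact_in d C' -> compact_in d (fun z => C z \/ C' z).
Proof.
  intros HC HC' I U HU Hcov.
  destruct (HC I U HU) as [l Hl]; [intros x Cx; apply Hcov; auto|].
  destruct (HC' I U HU) as [l' Hl']; [intros x Cx; apply Hcov; auto|].
  exists (l ++ l'). intros x [Cx | Cx].
  - destruct (Hl x Cx) as [i [? ?]]. exists i. split; [apply in_or_app|]; auto.
  - destruct (Hl' x Cx) as [i [? ?]]. exists i. split; [apply in_or_app|]; auto.
Qed.

Lemma cluster_point Z P (u : nat -> X) :
  compact_in d Z -> unbounded P -> (forall k, P k -> Z (u k)) ->
  exists c, Z c /\ forall e, 0 < e -> frequently_in P (fun k => d c (u k) < e).
Proof.
  intros HZ HP Hu. apply NNPP. intros Hnone.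
  (* every point of Z has a ball that u eventually avoids *)
  assert (Havoid : forall c, exists p : R * nat, Z c -> 0 < fst p /\
            forall k, (snd p <= k)%nat -> P k -> ~ d c (u k) < fst p).
  { intros c. apply NNPP. intros Hc. apply Hnone. exists c.
    assert (Zc : Z c) by (apply NNPP; intros nZ; apply Hc; exists (1, O); tauto).
    split; [exact Zc|]. intros e He N. apply NNPP. intros Hf. apply Hc.
    exists (e, N). intros _. split; [exact He|].
    intros k Hk Pk Hdk. apply Hf. exists k. auto. }
  destruct (functional_choice _ Havoid) as [F HF].
  destruct (HZ X (fun c z => Z c /\ d c z < fst (F c))) as [l Hl].
  - intros c z [Zc Hz]. destruct (ball_open c (fst (F c)) z Hz) as [r [Hr Hb]].
    exists r. split; auto.
  - intros x Zx. exists x. split; [exact Zx|]. rewrite metric_refl. apply (HF x Zx).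
  - destruct (list_bound (fun c => snd (F c)) l) as [N HN].
    destruct (HP N) as [k [Hk Pk]].
    destruct (Hl (u k) (Hu k Pk)) as [c [Hin [Zc Hc]]].
    apply (proj2 (HF c Zc) k); auto. specialize (HN c Hin). lia.
Qed.

Lemma convergent_subsequence Z P (u : nat -> X) :
  compact_in d Z -> unbounded P -> (forall k, P k -> Z (u k)) ->
  exists Q, (forall k, Q k -> P k) /\ unbounded Q /\
    exists c, Z c /\ forall e, 0 < e -> eventually_in Q (fun k => d c (u k) < e).
Proof.
  intros HZ HP Hu. destruct (cluster_point Z P u HZ HP Hu) as [c [Zc Hc]].
  destruct (diagonal_subsequence P (fun j k => d c (u k) < inv_succ j))
    as [Q [HQP [HQ HQR]]].
  - intros j. apply Hc, inv_succ_pos.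
  - intros j k H. pose proof (inv_succ_antitone j (S j) ltac:(lia)). lra.
  - exists Q. repeat split; auto. exists c. split; [exact Zc|].
    intros e He. destruct (inv_succ_small e He) as [j Hj].
    apply (eventually_mono Q (fun k => d c (u k) < inv_succ j)); [|apply HQR].
    intros. lra.
Qed.

Lemma singleton_connected x : connected_in d (fun w => w = x).
Proof.
  intros U V HU HV Hcov Hdis. destruct (Hcov x eq_refl) as [Ux | Vx].
  - right. intros w [-> Vw]. apply (Hdis x). auto.
  - left. intros w [-> Uw]. apply (Hdis x). auto.
Qed.

(** A component is connected (it is the union of connected sets through [x]). *)
Lemma component_connected S x : connected_in d (fun w => component_in d S x w).
Proof.
  intros U V HU HV Hcov Hdis. apply NNPP. intros Hn.
  apply not_or_and in Hn as [H1 H2].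
  apply not_all_ex_not in H1 as [w1 H1]. apply not_all_ex_not in H2 as [w2 H2].
  apply NNPP in H1 as [[A1 [HA1S [HA1c [HA1x HA1w]]]] Uw1].
  apply NNPP in H2 as [[A2 [HA2S [HA2c [HA2x HA2w]]]] Vw2].
  (* a connected set through x inside S lies in the component, hence cannot
     meet both U and V *)
  assert (Hsplit : forall A, (forall w, A w -> S w) -> connected_in d A -> A x ->
            (forall w, ~ (A w /\ U w)) \/ (forall w, ~ (A w /\ V w))).
  { intros A HAS HAc HAx. apply (HAc U V HU HV).
    - intros w Aw. apply Hcov. exists A. auto.
    - intros w [Aw [Uw Vw]]. apply (Hdis w). split; [exists A; auto | auto]. }
  assert (Cx : component_in d S x x) by (exists A1; auto).
  destruct (Hcov x Cx) as [Ux | Vx].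
  - destruct (Hsplit A2 HA2S HA2c HA2x) as [Hn | Hn];
      [apply (Hn x) | apply (Hn w2)]; auto.
  - destruct (Hsplit A1 HA1S HA1c HA1x) as [Hn | Hn];
      [apply (Hn w1) | apply (Hn x)]; auto.
Qed.

End MetricFacts.

Section UpperLimits.
Context {X : Type} (d : X -> X -> R) (Hd : is_metric d).

Definition meets (A : nat -> X -> Prop) (e : R) (w : X) (k : nat) : Prop :=
  exists a, A k a /\ d w a < e.

Definition upper_limit (Q : nat -> Prop) (A : nat -> X -> Prop) (w : X) : Prop :=
  forall e, 0 < e -> frequently_in Q (meets A e w).

Definition lower_limit (Q : nat -> Prop) (A : nat -> X -> Prop) (w : X) : Prop :=
  forall e, 0 < e -> eventually_in Q (meets A e w).

Lemma meets_mono A e e' w k : e <= e' -> meets A e w k -> meets A e' w k.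
Proof. intros H [a [? ?]]. exists a. split; [auto | lra]. Qed.

Lemma meets_shift A e w w' k : meets A e w k -> meets A (e + d w' w) w' k.
Proof.
  intros [a [? ?]]. exists a. split; [auto|].
  pose proof (metric_triangle d Hd w' w a). lra.
Qed.

Lemma lower_upper_limit Q A w : unbounded Q -> lower_limit Q A w -> upper_limit Q A w.
Proof. intros HQ H e He. apply eventually_frequently; auto. Qed.

Lemma upper_limit_closed Q A : closed_in d (upper_limit Q A).
Proof.
  intros w Hw. apply not_all_ex_not in Hw as [e He].
  apply imply_to_and in He as [He Hnot].
  exists (e / 2). split; [lra|]. intros z Hz Hlim. apply Hnot.
  apply (frequently_mono Q (meets A (e / 2) z)); [|apply Hlim; lra].
  intros k _ Hm. apply (meets_mono A (e / 2 + d w z)); [lra|].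
  apply meets_shift, Hm.
Qed.

Lemma cluster_upper_limit Q Q' A (s : nat -> X) c :
  (forall k, Q' k -> Q k /\ A k (s k)) ->
  (forall e, 0 < e -> frequently_in Q' (fun k => d c (s k) < e)) ->
  upper_limit Q A c.
Proof.
  intros Hs Hc e He. apply (frequently_sub Q Q'); [intros k Hk; apply Hs, Hk|].
  apply (frequently_mono Q' (fun k => d c (s k) < e)); [|apply Hc, He].
  intros k Qk Hk. exists (s k). split; [apply Hs, Qk | exact Hk].
Qed.

Lemma selection_lower_limit Q A (s : nat -> X) x :
  (forall k, Q k -> A k (s k)) ->
  (forall e, 0 < e -> eventually_in Q (fun k => d x (s k) < e)) ->
  lower_limit Q A x.
Proof.
  intros Hs Hx e He. apply (eventually_mono Q (fun k => d x (s k) < e)); [|apply Hx, He].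
  intros k Qk Hk. exists (s k). auto.
Qed.

Lemma lower_limit_selection Q A (x : X) :
  (forall k, Q k -> exists a, A k a) -> lower_limit Q A x ->
  exists s, (forall k, Q k -> A k (s k)) /\
    forall e, 0 < e -> eventually_in Q (fun k => d x (s k) < e).
Proof.
  intros Hne Hlow.
  assert (HN : forall j, exists N, forall k, (N <= k)%nat -> Q k ->
             meets A (inv_succ j) x k).
  { intros j. apply Hlow, inv_succ_pos. }
  destruct (functional_choice _ HN) as [N HN'].
  (* at index k, a point of A k that is as close to x as the thresholds
     N 0, ..., N t already passed by k guarantee *)
  assert (Hstage : forall k, Q k -> forall t, exists a, A k a /\
            forall j, (j <= t)%nat -> (N j <= k)%nat -> d x a < inv_succ j).
  { intros k Qk. induction t as [|t [a [Ha Hat]]].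
    - destruct (le_lt_dec (N O) k) as [Hle | Hlt].
      + destruct (HN' O k Hle Qk) as [a [? ?]]. exists a. split; [auto|].
        intros j Hj _. replace j with O by lia. auto.
      + destruct (Hne k Qk) as [a Ha]. exists a. split; [auto|].
        intros j Hj Hj'. replace j with O in Hj' by lia. lia.
    - destruct (le_lt_dec (N (S t)) k) as [Hle | Hlt].
      + destruct (HN' (S t) k Hle Qk) as [b [? ?]]. exists b. split; [auto|].
        intros j Hj _. pose proof (inv_succ_antitone j (S t) Hj). lra.
      + exists a. split; [auto|]. intros j Hj Hj'.
        destruct (Nat.eq_dec j (S t)) as [-> | Hne']; [lia | apply Hat; auto; lia]. }
  assert (Hs : forall k, exists a, Q k -> A k a /\
            forall j, (j <= k)%nat -> (N j <= k)%nat -> d x a < inv_succ j).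
  { intros k. destruct (classic (Q k)) as [Qk | nQ].
    - destruct (Hstage k Qk k) as [a Ha]. exists a. auto.
    - exists x. tauto. }
  destruct (functional_choice _ Hs) as [s Hs']. exists s. split.
  - intros k Qk. apply Hs', Qk.
  - intros e He. destruct (inv_succ_small e He) as [j Hj]. exists (max j (N j)).
    intros k Hk Qk. assert (d x (s k) < inv_succ j) by (apply Hs'; auto; lia). lra.
Qed.

Lemma relative_separation S U V :
  open_in d U -> open_in d V -> (forall x, ~ (S x /\ U x /\ V x)) ->
  exists U' V', open_in d U' /\ open_in d V' /\
    (forall x, S x -> U x -> U' x) /\ (forall x, S x -> V x -> V' x) /\
    (forall x, U' x -> V' x -> False).
Proof.
  intros HU HV Hdis.
  assert (Hradius : forall (W : X -> Prop), open_in d W ->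
            exists r : X -> R, forall a, S a -> W a ->
              0 < r a /\ forall z, d a z < r a -> W z).
  { intros W HW. apply (functional_choice (fun a r => S a -> W a ->
                     0 < r /\ forall z, d a z < r -> W z)).
    intros a. destruct (classic (W a)) as [Wa | nWa].
    - destruct (HW a Wa) as [r Hr]. exists r. auto.
    - exists 1. tauto. }
  destruct (Hradius U HU) as [r Hr]. destruct (Hradius V HV) as [s Hs].
  exists (fun w => exists a, S a /\ U a /\ d a w < r a / 2).
  exists (fun w => exists a, S a /\ V a /\ d a w < s a / 2).
  repeat split.
  - intros w [a [Sa [Ua Haw]]]. exists (r a / 2 - d a w). split; [lra|].
    intros z Hz. exists a. repeat split; auto.
    pose proof (metric_triangle d Hd a w z). lra.
  - intros w [a [Sa [Va Haw]]]. exists (s a / 2 - d a w). split; [lra|].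
    intros z Hz. exists a. repeat split; auto.
    pose proof (metric_triangle d Hd a w z). lra.
  - intros x Sx Ux. exists x. repeat split; auto. rewrite metric_refl by auto.
    destruct (Hr x Sx Ux). lra.
  - intros x Sx Vx. exists x. repeat split; auto. rewrite metric_refl by auto.
    destruct (Hs x Sx Vx). lra.
  - intros w [a [Sa [Ua Ha]]] [b [Sb [Vb Hb]]].
    pose proof (metric_triangle d Hd a w b). rewrite (metric_sym d Hd w b) in H.
    destruct (Hr a Sa Ua) as [_ HUa]. destruct (Hs b Sb Vb) as [_ HVb].
    destruct (Rle_lt_dec (s b) (r a)).
    + apply (Hdis b). repeat split; auto. apply HUa. lra.
    + apply (Hdis a). repeat split; auto. apply HVb.
      rewrite metric_sym by auto. lra.
Qed.

Lemma connected_escapes A U V a b :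
  connected_in d A -> open_in d U -> open_in d V ->
  (forall x, U x -> V x -> False) -> A a -> U a -> A b -> V b ->
  exists w, A w /\ ~ U w /\ ~ V w.
Proof.
  intros HA HU HV Hdis Aa Ua Ab Vb. apply NNPP. intros Hnone.
  destruct (HA U V HU HV) as [Hn | Hn].
  - intros w Aw. destruct (classic (U w)); [auto|].
    destruct (classic (V w)); [auto|]. exfalso. apply Hnone. eauto.
  - intros w [_ [Uw Vw]]. eauto.
  - apply (Hn a). auto.
  - apply (Hn b). auto.
Qed.

Section Connectedness.
Variables (Z : X -> Prop) (Q : nat -> Prop) (A : nat -> X -> Prop) (p : X).
Hypotheses (HZ : compact_in d Z) (HQ : unbounded Q)
  (HAZ : forall k, Q k -> forall w, A k w -> Z w)
  (HAc : forall k, Q k -> connected_in d (A k))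
  (Hp : lower_limit Q A p).

(** A separation of the upper limit cannot put [p] and another point of the
  upper limit on different sides: the connected sets [A k] would have to
  cross the gap infinitely often, producing a limit point in neither side. *)
Lemma upper_limit_not_split U V :
  open_in d U -> open_in d V ->
  (forall x, upper_limit Q A x -> U x \/ V x) ->
  (forall x, ~ (upper_limit Q A x /\ U x /\ V x)) ->
  U p -> forall s, upper_limit Q A s -> V s -> False.
Proof.
  intros HU HV Hcov Hdis Up s Ss Vs.
  set (S := upper_limit Q A) in *.
  destruct (relative_separation S U V HU HV Hdis)
    as [U' [V' [HU' [HV' [HUU' [HVV' Hdis']]]]]].
  assert (Sp : S p) by (apply lower_upper_limit; auto).
  destruct (HU' p (HUU' p Sp Up)) as [t [Ht HtU']].
  destruct (HV' s (HVV' s Ss Vs)) as [t' [Ht' HtV']].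
  set (Q' := fun k => Q k /\ meets A t' s k /\ meets A t p k).
  assert (HQ' : unbounded Q').
  { apply frequently_unbounded, frequently_eventually; [apply Ss, Ht' | apply Hp, Ht]. }
  assert (Hescape : forall k, exists w, Q' k -> A k w /\ ~ U' w /\ ~ V' w).
  { intros k. destruct (classic (Q' k)) as [[Qk [[b [Ab Hb]] [a [Aa Ha]]]] | nQ].
    - destruct (connected_escapes (A k) U' V' a b (HAc k Qk) HU' HV' Hdis' Aa
                  (HtU' a Ha) Ab (HtV' b Hb)) as [w Hw].
      exists w. auto.
    - exists p. tauto. }
  destruct (functional_choice _ Hescape) as [w Hw].
  destruct (cluster_point d Hd Z Q' w HZ HQ') as [c [_ Hc]].
  { intros k Qk. apply (HAZ k (proj1 Qk)), Hw, Qk. }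
  assert (Sc : S c).
  { apply (cluster_upper_limit Q Q' A w c); [|exact Hc].
    intros k Qk. split; [apply Qk | apply Hw, Qk]. }
  (* c lies in U' or V', so infinitely many w k would as well *)
  assert (Havoid : forall O, open_in d O -> (forall k, Q' k -> ~ O (w k)) -> ~ O c).
  { intros O HO Hn Oc. destruct (HO c Oc) as [r [Hr Hb]].
    destruct (Hc r Hr 0%nat) as [k [_ [Qk Hk]]]. apply (Hn k Qk). auto. }
  destruct (Hcov c Sc) as [Uc | Vc].
  - apply (Havoid U' HU'); [intros k Qk; apply Hw, Qk | apply HUU'; auto].
  - apply (Havoid V' HV'); [intros k Qk; apply Hw, Qk | apply HVV'; auto].
Qed.

Lemma upper_limit_connected : connected_in d (upper_limit Q A).
Proof.
  intros U V HU HV Hcov Hdis. apply NNPP. intros Hn.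
  apply not_or_and in Hn as [H1 H2].
  apply not_all_ex_not in H1 as [w1 H1]. apply not_all_ex_not in H2 as [w2 H2].
  apply NNPP in H1 as [S1 U1]. apply NNPP in H2 as [S2 V2].
  destruct (Hcov p (lower_upper_limit Q A p HQ Hp)) as [Up | Vp].
  - exact (upper_limit_not_split U V HU HV Hcov Hdis Up w2 S2 V2).
  - refine (upper_limit_not_split V U HV HU _ _ Vp w1 S1 U1).
    + intros x Sx. destruct (Hcov x Sx); auto.
    + intros x [Sx [Vx Ux]]. apply (Hdis x). auto.
Qed.

End Connectedness.

Lemma stabilize_finite (T : X -> nat -> Prop) (l : list X) (P : nat -> Prop) :
  unbounded P ->
  exists P', (forall k, P' k -> P k) /\ unbounded P' /\
    forall c, In c l -> (forall k, P' k -> T c k) \/ (forall k, P' k -> ~ T c k).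
Proof.
  intros HP. induction l as [|c l [P1 [H1 [HP1 Hstable]]]].
  - exists P. split; [auto|]. split; [auto | intros c []].
  - destruct (classic (frequently_in P1 (T c))) as [Hfreq | Hrare].
    + exists (fun k => P1 k /\ T c k). repeat split.
      * intros k [? ?]; auto.
      * apply frequently_unbounded; auto.
      * intros c' [<- | Hin]; [left; intros k [? ?]; auto|].
        destruct (Hstable c' Hin) as [Ha | Ha]; [left | right]; intros k [? ?]; auto.
    + assert (HN : exists N, forall k, (N <= k)%nat -> P1 k -> ~ T c k).
      { apply NNPP. intros Hn. apply Hrare. intros N. apply NNPP. intros Hm.
        apply Hn. exists N. intros k Hk Pk Tk. apply Hm. exists k. auto. }
      destruct HN as [N HN].
      exists (fun k => P1 k /\ (N <= k)%nat). repeat split.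
      * intros k [? ?]; auto.
      * intros M. destruct (HP1 (max M N)) as [k [Hk Pk]].
        exists k. repeat split; auto; lia.
      * intros c' [<- | Hin]; [right; intros k [? ?]; auto|].
        destruct (Hstable c' Hin) as [Ha | Ha]; [left | right]; intros k [? ?]; auto.
Qed.

Lemma stable_chain (T : nat -> X -> nat -> Prop) (net : nat -> list X)
  (P : nat -> Prop) :
  unbounded P ->
  exists chain : nat -> nat -> Prop, forall j,
    (forall k, chain j k -> P k) /\ unbounded (chain j) /\
    (forall c, In c (net j) ->
       (forall k, chain j k -> T j c k) \/ (forall k, chain j k -> ~ T j c k)) /\
    (forall k, chain (S j) k -> chain j k).
Proof.
  intros HP.
  set (stable := fun (P' : nat -> Prop) j => forall c, In c (net j) ->
         (forall k, P' k -> T j c k) \/ (forall k, P' k -> ~ T j c k)).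
  assert (Hrefine : forall pj : (nat -> Prop) * nat, exists P',
             (forall k, P' k -> fst pj k) /\
             (unbounded (fst pj) -> unbounded P' /\ stable P' (snd pj))).
  { intros [P0 j]. simpl. destruct (classic (unbounded P0)) as [HP0 | HnP0].
    - destruct (stabilize_finite (T j) (net j) P0 HP0) as [P' [H1 [H2 H3]]].
      exists P'. auto.
    - exists P0. split; [auto | tauto]. }
  destruct (functional_choice _ Hrefine) as [refine Hrf].
  pose (chain := fix F (j : nat) : nat -> Prop :=
          match j with O => refine (P, O) | S j' => refine (F j', S j') end).
  exists chain. induction j as [|j [IH1 [IH2 [IH3 IH4]]]].
  - destruct (Hrf (P, O)) as [Hsub Hst]. destruct (Hst HP) as [Hinf Hstab].
    destruct (Hrf (chain O, 1%nat)) as [Hsub' _]. simpl in *.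
    repeat split; auto.
  - destruct (Hrf (chain j, S j)) as [Hsub Hst]. simpl in Hsub, Hst.
    destruct (Hst IH2) as [Hinf Hstab].
    destruct (Hrf (chain (S j), S (S j))) as [Hsub' _]. simpl in Hsub'.
    repeat split; auto.
Qed.

(** Along the
  diagonal of a [stable_chain] for finite [1/(j+1)]-nets of [Z], whether [A k]
  meets the [1/(j+1)]-ball around a net point is eventually constant. *)
Lemma kuratowski_selection Z P A :
  compact_in d Z -> unbounded P -> (forall k, P k -> forall w, A k w -> Z w) ->
  exists Q, (forall k, Q k -> P k) /\ unbounded Q /\
    forall w, upper_limit Q A w -> lower_limit Q A w.
Proof.
  intros HZ HP HAZ.
  assert (Hnet : forall j, exists l : list X,
             forall z, Z z -> exists c, In c l /\ d c z < inv_succ j).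
  { intros j. destruct (HZ X (fun c z => d c z < inv_succ j)) as [l Hl].
    - intros c. apply ball_open; auto.
    - intros x Zx. exists x. rewrite metric_refl by auto. apply inv_succ_pos.
    - exists l. auto. }
  destruct (functional_choice _ Hnet) as [net Hnet'].
  destruct (stable_chain (fun j => meets A (inv_succ j)) net P HP) as [chain Hchain].
  destruct (diagonal_subsequence P chain) as [Q [HQP [HQ HQchain]]].
  - intros j N. destruct (proj1 (proj2 (Hchain j)) N) as [k [Hk Ck]].
    exists k. repeat split; auto. apply (Hchain j), Ck.
  - intros j k H. apply (Hchain j), H.
  - exists Q. repeat split; auto.
    intros w Hw e He. destruct (inv_succ_small (e / 3) ltac:(lra)) as [j Hj].
    destruct (HQchain j) as [N HN].
    destruct (Hw (inv_succ j) (inv_succ_pos j) N) as [k0 [Hk0 [Qk0 [a [Aa Ha]]]]].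
    destruct (Hnet' j a (HAZ k0 (HQP k0 Qk0) a Aa)) as [c [Hc Hca]].
    destruct (proj1 (proj2 (proj2 (Hchain j))) c Hc) as [Hall | Hnone].
    + exists N. intros k Hk Qk. destruct (Hall k (HN k Hk Qk)) as [a' [Aa' Ha']].
      exists a'. split; [auto|].
      pose proof (metric_triangle d Hd w a c). pose proof (metric_triangle d Hd w c a').
      rewrite (metric_sym d Hd a c) in H. lra.
    + exfalso. apply (Hnone k0); [auto | exists a; auto].
Qed.

End UpperLimits.

Section CompactOpen.
Context {X M : Type} (d : X -> X -> R) (rho : M -> M -> R)
  (Hd : is_metric d) (Hrho : is_metric rho).

(** Uniform neighbourhoods over a compact set are open in the compact-open
  topology: cover [Z] by small closed balls [C_i] on which [h] and [g] vary
  little and use the subbasic sets [C_i, ball(h x_i)]. *)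
Lemma uniform_nbhd_open Z (g : X -> M) e :
  compact_in d Z -> continuous_map d rho g ->
  CO_open d rho (fun h => forall x, Z x -> rho (h x) (g x) < e).
Proof.
  intros HZ Hg h Hh Hhg.
  set (gap := fun x => (e - rho (h x) (g x)) / 3).
  assert (Hr : forall x, exists r, Z x -> 0 < r /\ forall z, d x z < r ->
             rho (h x) (h z) < gap x /\ rho (g x) (g z) < gap x).
  { intros x. destruct (classic (Z x)) as [Zx | nZ]; [|exists 1; tauto].
    assert (Hgap : 0 < gap x) by (specialize (Hhg x Zx); unfold gap; lra).
    destruct (Hh x (gap x) Hgap) as [d1 [Hd1 H1]].
    destruct (Hg x (gap x) Hgap) as [d2 [Hd2 H2]].
    exists (Rmin d1 d2). intros _. split; [apply Rmin_glb_lt; auto|].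
    intros z Hz. pose proof (Rmin_l d1 d2). pose proof (Rmin_r d1 d2).
    split; [apply H1 | apply H2]; lra. }
  destruct (functional_choice _ Hr) as [r Hr'].
  destruct (HZ X (fun x z => Z x /\ d x z < r x / 2)) as [lx Hlx].
  - intros x z [Zx Hz]. destruct (ball_open d Hd x (r x / 2) z Hz) as [t [Ht Hb]].
    exists t. split; auto.
  - intros x Zx. exists x. split; [auto|]. rewrite metric_refl by auto.
    destruct (Hr' x Zx). lra.
  - exists (map (fun x => ((fun z => Z x /\ Z z /\ d x z <= r x / 2),
                          (fun v => rho (h x) v < gap x))) lx).
    split.
    + intros p Hp. apply in_map_iff in Hp as [x [<- Hx]]. simpl.
      split; [|split].
      * apply compact_ball_piece; auto.
      * apply ball_open; auto.
      * intros z [Zx [Zz Hz]]. destruct (Hr' x Zx) as [Hrx Hb].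
        destruct (Hb z) as [Hhz _]; [lra | exact Hhz].
    + intros h' Hh' Hl z Zz. destruct (Hlx z Zz) as [x [Hin [Zx Hxz]]].
      assert (Hp := Hl _ (in_map _ _ _ Hin) z). simpl in Hp.
      assert (Hle : d x z <= r x / 2) by lra.
      specialize (Hp (conj Zx (conj Zz Hle))).
      destruct (Hr' x Zx) as [Hrx Hb]. destruct (Hb z ltac:(lra)) as [_ Hgz].
      pose proof (metric_triangle rho Hrho (h' z) (h x) (g z)).
      pose proof (metric_triangle rho Hrho (h x) (g x) (g z)).
      rewrite (metric_sym rho Hrho (h' z) (h x)) in H.
      specialize (Hhg x Zx). unfold gap in *. lra.
Qed.

(** A sequence in a compact-open compact family has a member of the family
  as a cluster point for uniform convergence on a compact set: otherwise the
  uniform neighbourhoods eventually avoided by the sequence would form an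
  open cover of the family without finite subcover. *)
Lemma uniform_cluster_point Z (K : (X -> M) -> Prop) (G : nat -> X -> M) :
  compact_in d Z -> CO_compact d rho K -> (forall k, K (G k)) ->
  exists g, K g /\ forall e, 0 < e -> frequently_in (fun _ => True)
    (fun k => forall x, Z x -> rho (G k x) (g x) < e).
Proof.
  intros HZ HK HG. apply NNPP. intros Hn.
  set (close := fun g e k => forall x, Z x -> rho (G k x) (g x) < e).
  assert (Havoid : forall g, exists p : R * nat, K g -> 0 < fst p /\
            forall k, (snd p <= k)%nat -> ~ close g (fst p) k).
  { intros g. apply NNPP. intros Hc. apply Hn. exists g.
    assert (Kg : K g) by (apply NNPP; intros nK; apply Hc; exists (1, O); tauto).
    split; [auto|]. intros e He N. apply NNPP. intros Hf. apply Hc. exists (e, N).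
    intros _. split; [auto|]. intros k Hk Hc'. apply Hf. exists k. auto. }
  destruct (functional_choice _ Havoid) as [F HF].
  destruct (proj2 HK (X -> M)
              (fun g h => K g /\ forall x, Z x -> rho (h x) (g x) < fst (F g)))
    as [l Hl].
  - intros g h Hh [Kg Hhg].
    destruct (uniform_nbhd_open Z g (fst (F g)) HZ (proj1 HK g Kg) h Hh Hhg)
      as [l [Hl1 Hl2]].
    exists l. split; [auto|]. intros h' Hh' Hp. split; auto.
  - intros g Kg. exists g. split; [auto|]. intros x _. rewrite metric_refl by auto.
    apply (HF g Kg).
  - destruct (list_bound (fun g => snd (F g)) l) as [N HN].
    destruct (Hl (G N) (HG N)) as [g [Hin [Kg Hg]]].
    apply (proj2 (HF g Kg) N); [specialize (HN g Hin); lia | exact Hg].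
Qed.

Lemma uniformly_convergent_subsequence Z (K : (X -> M) -> Prop) (G : nat -> X -> M) :
  compact_in d Z -> CO_compact d rho K -> (forall k, K (G k)) ->
  exists Q g, unbounded Q /\ K g /\ forall e, 0 < e ->
    eventually_in Q (fun k => forall x, Z x -> rho (G k x) (g x) < e).
Proof.
  intros HZ HK HG.
  destruct (uniform_cluster_point Z K G HZ HK HG) as [g [Kg Hg]].
  set (close := fun e k => forall x, Z x -> rho (G k x) (g x) < e).
  destruct (diagonal_subsequence (fun _ => True) (fun j => close (inv_succ j)))
    as [Q [_ [HQ HQclose]]].
  - intros j. apply Hg, inv_succ_pos.
  - intros j k H x Zx. specialize (H x Zx).
    pose proof (inv_succ_antitone j (S j) ltac:(lia)). lra.
  - exists Q, g. repeat split; auto. intros e He.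
    destruct (inv_succ_small e He) as [j Hj].
    apply (eventually_mono Q (close (inv_succ j))); [|apply HQclose].
    intros k _ H x Zx. specialize (H x Zx). lra.
Qed.

End CompactOpen.

Section PerfectMaps.
Context {X Y : Type} (d : X -> X -> R) (dY : Y -> Y -> R)
  (HdY : is_metric dY) (f : X -> Y)
  (y : nat -> Y) (y0 : Y) (Hy : forall k, dY y0 (y k) < inv_succ k).

Definition fibres_over (x : X) : Prop := f x = y0 \/ exists k, f x = y k.

Lemma initial_fibres_compact :
  (forall y', compact_in d (fun x => f x = y')) ->
  forall N, compact_in d (fun x => exists k, (k < N)%nat /\ f x = y k).
Proof.
  intros Hfib N. induction N as [|N IH].
  - intros I U _ _. exists nil. intros x [k [Hk _]]. lia.
  - apply (compact_ext d (fun x => (exists k, (k < N)%nat /\ f x = y k) \/ f x = y N)).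
    + intros x. split.
      * intros [[k [Hk Hx]] | Hx]; [exists k | exists N]; split; auto; lia.
      * intros [k [Hk Hx]]. destruct (Nat.eq_dec k N) as [-> | Hne]; [right; auto|].
        left. exists k. split; [lia | auto].
    + apply compact_union; auto.
Qed.

(** The preimage under a perfect map of a convergent sequence with its limit
  is compact: a cover of the fibre over [y0] also covers the fibres over all
  but finitely many [y k], because [f] is closed. *)
Lemma fibres_over_compact : perfect_map d dY f -> compact_in d fibres_over.
Proof.
  intros [_ [Hclosed Hfib]] I U HU Hcov.
  destruct (Hfib y0 I U HU) as [l0 Hl0]; [intros x Hx; apply Hcov; left; auto|].
  set (O := fun z => exists i, In i l0 /\ U i z).
  assert (HO : open_in d O).
  { intros z [i [Hi Uz]]. destruct (HU i z Uz) as [r [Hr Hb]].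
    exists r. split; [auto|]. intros w Hw. exists i. auto. }
  assert (HOc : closed_in d (fun z => ~ O z)).
  { intros z Hz. apply NNPP in Hz. destruct (HO z Hz) as [r [Hr Hb]].
    exists r. split; [auto|]. intros w Hw Hn. apply Hn. auto. }
  (* a ball around y0 misses the closed image of the complement of O *)
  destruct (Hclosed _ HOc y0) as [r [Hr Hball]].
  { intros [x [Hx Hfx]]. apply Hx. apply Hl0. auto. }
  destruct (inv_succ_small r Hr) as [K0 HK0].
  destruct (initial_fibres_compact Hfib K0 I U HU) as [l Hl].
  { intros x [k [_ Hx]]. apply Hcov. right. eauto. }
  exists (l0 ++ l). intros x [Hx | [k Hx]].
  - destruct (Hl0 x Hx) as [i [? ?]]. exists i. split; [apply in_or_app|]; auto.
  - destruct (le_lt_dec K0 k) as [Hle | Hlt].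
    + assert (Ox : O x).
      { apply NNPP. intros nO. apply (Hball (y k)); [|exists x; auto].
        pose proof (inv_succ_antitone _ _ Hle). specialize (Hy k). lra. }
      destruct Ox as [i [? ?]]. exists i. split; [apply in_or_app|]; auto.
    + destruct (Hl x (ex_intro _ k (conj Hlt Hx))) as [i [? ?]].
      exists i. split; [apply in_or_app|]; auto.
Qed.

Lemma upper_limit_fibre Q A w :
  continuous_map d dY f -> (forall k x, Q k -> A k x -> f x = y k) ->
  upper_limit d Q A w -> f w = y0.
Proof.
  intros Hf HA Hw. apply (metric_eq_of_small dY HdY). intros e He.
  destruct (Hf w (e / 2) ltac:(lra)) as [del [Hdel Hb]].
  destruct (inv_succ_small (e / 2) ltac:(lra)) as [j Hj].
  destruct (Hw del Hdel j) as [k [Hk [Qk [a [Aa Ha]]]]].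
  specialize (Hb a Ha). rewrite (HA k a Qk Aa) in Hb.
  pose proof (inv_succ_antitone _ _ Hk). specialize (Hy k).
  pose proof (metric_triangle dY HdY (f w) (y k) y0).
  rewrite (metric_sym dY HdY (y k) y0) in H0. lra.
Qed.

End PerfectMaps.

Section BadContinua.
Context {X Y M : Type} (d : X -> X -> R) (rho : M -> M -> R) (f : X -> Y) (m n : nat).

(** A witness that [G] is not in K(m,n,y): a continuum [L] in the fibre over
  [y], with diam G(L) >= 1/n, such that for every [x] in [L] the component
  C(x, G | f^-1(y)) has a point at distance >= 1/m from [L]. *)
Definition bad_continuum (y : Y) (G : X -> M) (L : X -> Prop) : Prop :=
  continuum_in d L /\ (forall x, L x -> f x = y) /\ diam_ge rho G L (1 / INR n) /\
  forall x, L x -> exists z, Ccomp d f G y x z /\ forall a, L a -> 1 / INR m <= d z a.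

Lemma not_Kset_bad_continuum y G :
  continuous_map d rho G -> ~ Kset d rho f m n y G -> exists L, bad_continuum y G L.
Proof.
  intros HG HnK. apply NNPP. intros Hnone. apply HnK. split; [exact HG|].
  intros L HL HLf HLd. apply NNPP. intros Hx. apply Hnone.
  exists L. split; [exact HL|]. split; [exact HLf|]. split; [exact HLd|].
  intros x Lx. apply NNPP. intros Hz. apply Hx.
  exists x. split; [auto|]. intros z Hc. apply NNPP. intros Hfar. apply Hz.
  exists z. split; [auto|]. intros a La. apply Rnot_lt_le. intros Hda.
  apply Hfar. exists a. auto.
Qed.

Lemma diameter_witnesses (G : nat -> X -> M) (L : nat -> X -> Prop) r :
  (forall k, diam_ge rho (G k) (L k) r) ->
  exists a b : nat -> X, forall k,
    L k (a k) /\ L k (b k) /\ r - inv_succ k < rho (G k (a k)) (G k (b k)).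
Proof.
  intros Hdiam.
  assert (Hpair : forall k, exists p : X * X, L k (fst p) /\ L k (snd p) /\
             r - inv_succ k < rho (G k (fst p)) (G k (snd p))).
  { intros k. pose proof (inv_succ_pos k).
    destruct (Hdiam k (r - inv_succ k)) as [a [b Hab]]; [lra|].
    exists (a, b). exact Hab. }
  destruct (functional_choice _ Hpair) as [ab Hab].
  exists (fun k => fst (ab k)), (fun k => snd (ab k)). exact Hab.
Qed.

End BadContinua.

Section LimitArgument.
Context {X Y M : Type} (d : X -> X -> R) (dY : Y -> Y -> R) (rho : M -> M -> R)
  (Hd : is_metric d) (HdY : is_metric dY) (Hrho : is_metric rho)
  (f : X -> Y) (Hf : perfect_map d dY f) (m n : nat)
  (y : nat -> Y) (y0 : Y) (Hy : forall k, dY y0 (y k) < inv_succ k)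
  (G : nat -> X -> M) (g : X -> M) (Hg : continuous_map d rho g)
  (Ls : nat -> X -> Prop) (HLs : forall k, bad_continuum d rho f m n (y k) (G k) (Ls k))
  (Q : nat -> Prop) (HQ : unbounded Q).

(** The standing assumptions, obtained by passing to a subsequence: [G k]
  converges to [g] uniformly on the compact set [fibres_over f y y0], the
  sets [Ls k] converge in the sense of Kuratowski, and a pair of points of
  [Ls k] nearly realising the diameter converges. *)
Hypothesis Hunif : forall e, 0 < e -> eventually_in Q
  (fun k => forall x, fibres_over f y y0 x -> rho (G k x) (g x) < e).
Hypothesis Hkur : forall w, upper_limit d Q Ls w -> lower_limit d Q Ls w.
Variables (a b : nat -> X) (a0 b0 : X).
Hypothesis Hab : forall k,
  Ls k (a k) /\ Ls k (b k) /\ 1 / INR n - inv_succ k < rho (G k (a k)) (G k (b k)).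
Hypothesis Ha0 : forall e, 0 < e -> eventually_in Q (fun k => d a0 (a k) < e).
Hypothesis Hb0 : forall e, 0 < e -> eventually_in Q (fun k => d b0 (b k) < e).

Let L := upper_limit d Q Ls.

Lemma bad_continuum_in_fibres k x : Ls k x -> fibres_over f y y0 x.
Proof. intros Hx. right. exists k. apply (HLs k), Hx. Qed.

Lemma limit_in_fibre w : L w -> f w = y0.
Proof.
  apply (upper_limit_fibre d dY HdY f y y0 Hy Q Ls w); [apply Hf|].
  intros k x _ Hx. apply (HLs k), Hx.
Qed.

(** The limit continuum [L] is a continuum: it is closed in the compact fibre
  over [y0], and connected as a limit of continua through [a0]. *)
Lemma limit_continuum : continuum_in d L.
Proof.
  assert (HZ := fibres_over_compact d dY f y y0 Hy Hf).
  assert (Ha0L : lower_limit d Q Ls a0).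
  { apply (selection_lower_limit d Q Ls a); [intros k _; apply Hab | exact Ha0]. }
  split; [|split].
  - exists a0. apply lower_upper_limit; auto.
  - apply (compact_ext d (fun z => f z = y0 /\ L z)).
    + intros z. split; [tauto|]. intros Hz. split; [apply limit_in_fibre|]; auto.
    + apply compact_closed_inter; [apply Hf | apply upper_limit_closed; auto].
  - apply (upper_limit_connected d Hd (fibres_over f y y0) Q Ls a0); auto.
    + intros k _. apply bad_continuum_in_fibres.
    + intros k _. apply (HLs k).
Qed.

(** Uniform convergence transports the diameter bound to the limit:
  rho(g a0, g b0) >= 1/n. *)
Lemma limit_diameter : diam_ge rho g L (1 / INR n).
Proof.
  intros r' Hr'. exists a0, b0.
  split; [apply lower_upper_limit, (selection_lower_limit d Q Ls a); auto;
          intros k _; apply Hab|].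
  split; [apply lower_upper_limit, (selection_lower_limit d Q Ls b); auto;
          intros k _; apply Hab|].
  set (del := (1 / INR n - r') / 6). assert (Hdel : 0 < del) by (unfold del; lra).
  destruct (Hg a0 del Hdel) as [ta [Hta Hga]].
  destruct (Hg b0 del Hdel) as [tb [Htb Hgb]].
  destruct (inv_succ_small del Hdel) as [j Hj].
  destruct (eventually_frequently _ _ HQ
              (eventually_and _ _ _ (Hunif del Hdel)
                 (eventually_and _ _ _ (Ha0 ta Hta)
                    (eventually_and _ _ _ (Hb0 tb Htb) (eventually_ge Q j)))) O)
    as [k [_ [Qk [Hu [Hak [Hbk Hjk]]]]]].
  destruct (Hab k) as [Lak [Lbk Hfar]].
  pose proof (Hu (a k) (bad_continuum_in_fibres k _ Lak)).
  pose proof (Hu (b k) (bad_continuum_in_fibres k _ Lbk)).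
  pose proof (Hga _ Hak). pose proof (Hgb _ Hbk). pose proof (inv_succ_antitone _ _ Hjk).
  pose proof (metric_triangle rho Hrho (G k (a k)) (g (a k)) (G k (b k))).
  pose proof (metric_triangle rho Hrho (g (a k)) (g a0) (G k (b k))).
  pose proof (metric_triangle rho Hrho (g a0) (g b0) (G k (b k))).
  pose proof (metric_triangle rho Hrho (g b0) (g (b k)) (G k (b k))).
  rewrite (metric_sym rho Hrho (g (a k)) (g a0)) in *.
  rewrite (metric_sym rho Hrho (g (b k)) (G k (b k))) in *.
  unfold del in *. lra.
Qed.

Section Components.
Variables (x : X) (xs : nat -> X).
Hypothesis Hxs : forall k, Q k -> Ls k (xs k).
Hypothesis Hxconv : forall e, 0 < e -> eventually_in Q (fun k => d x (xs k) < e).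

Let Cs (k : nat) : X -> Prop := Ccomp d f (G k) (y k) (xs k).

Lemma component_level k w : Cs k w -> G k w = G k (xs k) /\ f w = y k.
Proof. intros [A [HA [_ [_ Aw]]]]. apply HA, Aw. Qed.

Lemma limit_component_level w : upper_limit d Q Cs w -> g w = g x.
Proof.
  intros Hw. apply (metric_eq_of_small rho Hrho). intros e He.
  set (del := e / 4). assert (Hdel : 0 < del) by (unfold del; lra).
  destruct (Hg w del Hdel) as [t [Ht Hgw]].
  destruct (Hg x del Hdel) as [t' [Ht' Hgx]].
  destruct (frequently_eventually _ _ _ (Hw t Ht)
              (eventually_and _ _ _ (Hunif del Hdel) (Hxconv t' Ht')) O)
    as [k [_ [Qk [[c [Cc Hc]] [Hu Hxk]]]]].
  destruct (component_level k c Cc) as [HGc Hfc].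
  pose proof (Hgw c Hc). pose proof (Hgx _ Hxk).
  assert (Hcz : fibres_over f y y0 c) by (right; exists k; auto).
  pose proof (Hu c Hcz). pose proof (Hu (xs k) (bad_continuum_in_fibres k _ (Hxs k Qk))).
  rewrite HGc in H1.
  pose proof (metric_triangle rho Hrho (g w) (g c) (g x)).
  pose proof (metric_triangle rho Hrho (g c) (G k (xs k)) (g x)).
  pose proof (metric_triangle rho Hrho (G k (xs k)) (g (xs k)) (g x)).
  rewrite (metric_sym rho Hrho (g c) (G k (xs k))) in H4.
  rewrite (metric_sym rho Hrho (g (xs k)) (g x)) in H5.
  unfold del in *. lra.
Qed.

(** The upper limit of the components lies in the component
  C(x, g | f^-1(y0)): it is connected, contains [x], and lies in
  g^-1(g x) /\ f^-1(y0). *)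
Lemma limit_component w : upper_limit d Q Cs w -> Ccomp d f g y0 x w.
Proof.
  intros Hw. exists (upper_limit d Q Cs).
  assert (HCs_x : lower_limit d Q Cs x).
  { apply (selection_lower_limit d Q Cs xs); [|exact Hxconv].
    intros k Qk. exists (fun v => v = xs k).
    split; [intros v ->; split; [auto | apply (HLs k), Hxs, Qk]|].
    split; [apply singleton_connected | split; auto]. }
  split; [|split; [|split; [apply lower_upper_limit; auto | exact Hw]]].
  - intros v Hv. split; [apply limit_component_level; auto|].
    apply (upper_limit_fibre d dY HdY f y y0 Hy Q Cs); auto; [apply Hf|].
    intros k u _ Hu. apply (component_level k u Hu).
  - apply (upper_limit_connected d Hd (fibres_over f y y0) Q Cs x); auto.
    + exact (fibres_over_compact d dY f y y0 Hy Hf).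
    + intros k _ v Hv. right. exists k. apply (component_level k v Hv).
    + intros k _. apply component_connected.
Qed.

End Components.

(** The limit map [g] cannot lie in K(m,n,y0): the continuum [L] would have
  a point [x] whose component stays near [L], while the components through
  points of [Ls k] close to [x] escape the [1/m]-neighbourhood of [Ls k]. *)
Lemma limit_not_in_Kset : ~ Kset d rho f m n y0 g.
Proof.
  intros [_ HK].
  destruct (HK L limit_continuum limit_in_fibre limit_diameter) as [x [Lx Hnear]].
  destruct (lower_limit_selection d Q Ls x) as [xs [Hxs Hxconv]].
  { intros k _. destruct (HLs k) as [[Hne _] _]. exact Hne. }
  { apply Hkur, Lx. }
  assert (Hescape : forall k, exists z, Q k ->
            Ccomp d f (G k) (y k) (xs k) z /\ forall a, Ls k a -> 1 / INR m <= d z a).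
  { intros k. destruct (classic (Q k)) as [Qk | nQ]; [|exists x; tauto].
    destruct (HLs k) as [_ [_ [_ Hbad]]]. destruct (Hbad (xs k) (Hxs k Qk)) as [z Hz].
    exists z. auto. }
  destruct (functional_choice _ Hescape) as [zs Hzs].
  destruct (cluster_point d Hd (fibres_over f y y0) Q zs) as [z0 [_ Hz0]]; auto.
  { exact (fibres_over_compact d dY f y y0 Hy Hf). }
  { intros k Qk. right. exists k. apply (component_level xs k (zs k)), Hzs, Qk. }
  assert (Hcomp : Ccomp d f g y0 x z0).
  { apply (limit_component x xs Hxs Hxconv).
    apply (cluster_upper_limit d Q Q _ zs); [|exact Hz0].
    intros k Qk. split; [auto | apply Hzs, Qk]. }
  destruct (Hnear z0 Hcomp) as [l [Ll Hlz]].
  set (e := (1 / INR m - d z0 l) / 2). assert (He : 0 < e) by (unfold e; lra).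
  destruct (frequently_eventually _ _ _ (Hz0 e He) (Hkur l Ll e He) O)
    as [k [_ [Qk [Hzk [l' [Ll' Hl']]]]]].
  pose proof (proj2 (Hzs k Qk) l' Ll').
  pose proof (metric_triangle d Hd (zs k) z0 l'). pose proof (metric_triangle d Hd z0 l l').
  rewrite (metric_sym d Hd (zs k) z0) in H0.
  unfold e in *. lra.
Qed.

End LimitArgument.

(** If no neighbourhood of [y0] works, there are [y k -> y0] and [G k] in [K]
  having bad continua over [y k]; only the K(m,n,y) part of Phi can fail,
  since the condition B_rho(g0,eps) does not involve [y]. *)
Lemma instability_sequence {X Y M : Type} (d : X -> X -> R) (dY : Y -> Y -> R)
  (rho : M -> M -> R) (HdY : is_metric dY) (f : X -> Y) (m n : nat)
  (g0 : X -> M) (eps : X -> R) (y0 : Y) (K : (X -> M) -> Prop) :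
  (forall g, K g -> Bset d rho g0 eps g) ->
  ~ (exists V : Y -> Prop, open_in dY V /\ V y0 /\
       forall y, V y -> forall g, K g -> Phi d rho f m n g0 eps y g) ->
  exists (y : nat -> Y) (G : nat -> X -> M) (Ls : nat -> X -> Prop), forall k,
    dY y0 (y k) < inv_succ k /\ K (G k) /\ bad_continuum d rho f m n (y k) (G k) (Ls k).
Proof.
  intros HB Hno.
  assert (Hbad : forall k, exists p : Y * (X -> M) * (X -> Prop),
             dY y0 (fst (fst p)) < inv_succ k /\ K (snd (fst p)) /\
             bad_continuum d rho f m n (fst (fst p)) (snd (fst p)) (snd p)).
  { intros k. apply NNPP. intros Hk. apply Hno.
    exists (fun y => dY y0 y < inv_succ k). split; [apply ball_open; auto|].
    split; [rewrite metric_refl by auto; apply inv_succ_pos|].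
    intros y Hy g Kg. split; [|apply HB, Kg].
    apply NNPP. intros HnK.
    destruct (not_Kset_bad_continuum d rho f m n y g) as [L HL]; [apply HB, Kg | exact HnK|].
    apply Hk. exists (y, g, L). auto. }
  destruct (functional_choice _ Hbad) as [p Hp].
  exists (fun k => fst (fst (p k))), (fun k => snd (fst (p k))), (fun k => snd (p k)).
  exact Hp.
Qed.

Lemma refined_subsequence {X M : Type} (d : X -> X -> R) (rho : M -> M -> R)
  (Hd : is_metric d) (Hrho : is_metric rho) (Z : X -> Prop)
  (K : (X -> M) -> Prop) (G : nat -> X -> M) (Ls : nat -> X -> Prop) (a b : nat -> X) :
  compact_in d Z -> CO_compact d rho K -> (forall k, K (G k)) ->
  (forall k x, Ls k x -> Z x) -> (forall k, Ls k (a k) /\ Ls k (b k)) ->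
  exists Q g a0 b0, unbounded Q /\ K g /\
    (forall e, 0 < e -> eventually_in Q (fun k => forall x, Z x -> rho (G k x) (g x) < e)) /\
    (forall e, 0 < e -> eventually_in Q (fun k => d a0 (a k) < e)) /\
    (forall e, 0 < e -> eventually_in Q (fun k => d b0 (b k) < e)) /\
    (forall w, upper_limit d Q Ls w -> lower_limit d Q Ls w).
Proof.
  intros HZ HK HG HLZ Hab.
  destruct (uniformly_convergent_subsequence d rho Hd Hrho Z K G HZ HK HG)
    as [Q1 [g [HQ1 [Kg Hunif]]]].
  destruct (convergent_subsequence d Hd Z Q1 a HZ HQ1) as [Q2 [HQ21 [HQ2 [a0 [_ Ha0]]]]].
  { intros k _. apply (HLZ k), Hab. }
  destruct (convergent_subsequence d Hd Z Q2 b HZ HQ2) as [Q3 [HQ32 [HQ3 [b0 [_ Hb0]]]]].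
  { intros k _. apply (HLZ k), Hab. }
  destruct (kuratowski_selection d Hd Z Q3 Ls HZ HQ3) as [Q [HQ3' [HQ Hkur]]].
  { intros k _. apply HLZ. }
  exists Q, g, a0, b0. repeat split; auto.
  - intros e He. apply (eventually_sub Q1); [intros k Qk; auto | apply Hunif, He].
  - intros e He. apply (eventually_sub Q2); [intros k Qk; auto | apply Ha0, He].
  - intros e He. apply (eventually_sub Q3); [intros k Qk; auto | apply Hb0, He].
Qed.

(** Lemma 2.5. *)
Theorem lemma2p5
  (X Y M : Type) (d : X -> X -> R) (dY : Y -> Y -> R) (rho : M -> M -> R)
  (Hd : is_metric d) (HdY : is_metric dY) (Hrho : is_metric rho)
  (Hcomplete : complete_metric rho)
  (f : X -> Y) (Hf : perfect_map d dY f)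
  (m n : nat) (Hm : (1 <= m)%nat) (Hn : (1 <= n)%nat)
  (g0 : X -> M) (Hg0 : continuous_map d rho g0)
  (eps : X -> R) (Heps_cont : continuous_map d (fun a b => Rabs (a - b)) eps)
  (Heps : forall x, 0 < eps x /\ eps x <= 1 / 64)
  (y0 : Y) (K : (X -> M) -> Prop)
  (HK : CO_compact d rho K)
  (HKsub : forall g, K g -> Phi d rho f m n g0 eps y0 g) :
  exists V : Y -> Prop, open_in dY V /\ V y0 /\
    forall y, V y -> forall g, K g -> Phi d rho f m n g0 eps y g.
Proof.
  apply NNPP. intros Hno.
  destruct (instability_sequence d dY rho HdY f m n g0 eps y0 K) as [y [G [Ls Hseq]]];
    [intros g Kg; apply HKsub, Kg | exact Hno|].
  assert (Hy : forall k, dY y0 (y k) < inv_succ k) by apply Hseq.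
  assert (HLs : forall k, bad_continuum d rho f m n (y k) (G k) (Ls k)) by apply Hseq.
  destruct (diameter_witnesses rho G Ls (1 / INR n)) as [a [b Hab]];
    [intros k; apply HLs|].
  destruct (refined_subsequence d rho Hd Hrho (fibres_over f y y0) K G Ls a b)
    as [Q [g [a0 [b0 [HQ [Kg [Hunif [Ha0 [Hb0 Hkur]]]]]]]]].
  - exact (fibres_over_compact d dY f y y0 Hy Hf).
  - exact HK.
  - apply Hseq.
  - apply (bad_continuum_in_fibres d rho f m n y y0 G Ls HLs).
  - intros k. split; apply Hab.
  - apply (limit_not_in_Kset d dY rho Hd HdY Hrho f Hf m n y y0 Hy G g
             (proj1 HK g Kg) Ls HLs Q HQ Hunif Hkur a b a0 b0 Hab Ha0 Hb0).
    apply (HKsub g Kg).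
Qed.
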